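(* Let $B\in\mathbb{R}^{p\times H}$ be the incidence matrix described in the context. Then $\mathcal D=\{\mathrm{diag}(\exp(Bu)) : u\in\mathbb{R}^H\}$ (exponential taken entrywise). Consequently, the problem $\min_{D'=\mathrm{diag}(d')\in\mathcal D}\ p\log\big(\sum_{i=1}^pd'_iG_{ii}\big)-\sum_{i=1}^p\log d'_i$ is equivalent to $$\min_{u\in\mathbb{R}^H}F(u),\qquad F(u):=p\log\Big(\sum_{i=1}^pe^{(Bu)_i}G_{ii}\Big)-\sum_{i=1}^p(Bu)_i,$$ in the sense that if $u$ solves the latter then $D':=\mathrm{diag}(\exp(Bu))$ solves the former.
   Context: $\mathcal G=(V,E)$ is a finite DAG; input neurons have no incoming edges, output neurons no outgoing edges, hidden neurons $\mathcal H$ ($H=|\mathcal H|$) are the rest. $\theta\in\mathbb{R}^p$ consists of one weight per edge and one bias $b_v$ per non-input neuron $v$. For $h\in\mathcal H$, $\mathrm{in}_h$ = indices of $b_h$ and of incoming edge weights of $h$, $\mathrm{out}_h$ = indices of outgoing edge weights of $h$. $B$ has columns indexed by $h\in\mathcal H$: $B_{ih}=-1$ if $i\in\mathrm{in}_h$, $B_{ih}=1$ if $i\in\mathrm{out}_h$, $0$ otherwise. For $\lambda>0$, $D_{\lambda,h}$ is the diagonal $p\times p$ matrix with entries $\lambda$ on $\mathrm{in}_h$, $1/\lambda$ on $\mathrm{out}_h$, $1$ elsewhere; $\mathcal D$ is the group generated by all $D_{\lambda,h}$. $G=G_\theta=\partial\Phi(\theta)^\top\partial\Phi(\theta)$, where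 $\Phi:\mathbb{R}^p\to\mathbb{R}^q$ is the path-lifting: for each path $v_0\to\cdots\to v_d$ along edges ending at an output neuron (for $d=0$, $v_0$ non-input), the coordinate is the product of the weights along the path, multiplied by $b_{v_0}$ if $v_0$ is not an input neuron. *)

From HB Require Import structures.
From mathcomp Require Import all_boot all_order all_algebra.
From mathcomp Require Import all_classical all_reals all_analysis.
Set Implicit Arguments. Unset Strict Implicit. Unset Printing Implicit Defensive.
Import Order.TTheory GRing.Theory Num.Theory.
Import numFieldNormedType.Exports.
Local Open Scope ring_scope.

Section NN.
Variables (V : finType) (E : rel V).

Definition acyclic_graph : Prop := forall u v, E u v -> ~~ connect E v u.

Definition is_input (v : V) : bool := [forall u, ~~ E u v].
Definition is_output (v : V) : bool := [forall w, ~~ E v w].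
Definition is_hidden (v : V) : bool := ~~ is_input v && ~~ is_output v.

Definition edge_t : finType := {uv : V * V | E uv.1 uv.2}.
Definition noninput_t : finType := {v : V | ~~ is_input v}.
Definition hidden_t : finType := {v : V | is_hidden v}.

(* Parameter index set: one weight per edge, one bias per non-input neuron. *)
Definition param_t : finType := (edge_t + noninput_t)%type.
Definition np : nat := #|param_t|.
Definition nH : nat := #|hidden_t|.

Definition in_h (k : param_t) (h : V) : bool :=
  match k with inl e => (val e).2 == h | inr v => val v == h end.
Definition out_h (k : param_t) (h : V) : bool :=
  match k with inl e => (val e).1 == h | inr _ => false end.

Variable R : realType.

Definition Bmx : 'M[R]_(np, nH) :=
  \matrix_(i < np, j < nH)
    (let k := enum_val i in let h := val (enum_val j) in
     if in_h k h then -1 else if out_h k h then 1 else 0).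

Definition Dlam (lam : R) (h : hidden_t) : 'M[R]_np :=
  diag_mx (\row_(i < np)
    (let k := enum_val i in
     if in_h k (val h) then lam else if out_h k (val h) then lam^-1 else 1)).

Inductive Dgroup : 'M[R]_np -> Prop :=
  | Dgroup1 : Dgroup 1%:M
  | DgroupD (lam : R) (h : hidden_t) : 0 < lam -> Dgroup (Dlam lam h)
  | DgroupM (A C : 'M[R]_np) : Dgroup A -> Dgroup C -> Dgroup (A *m C)
  | DgroupV (A : 'M[R]_np) : Dgroup A -> Dgroup (invmx A).

Definition pathidx_t : finType := {n : 'I_#|V| & n.+1.-tuple V}.

Definition valid_path (x : pathidx_t) : bool :=
  let t := tagged x in
  [&& sorted E t, is_output (last (thead t) t)
    & (0 < tag x)%N || ~~ is_input (thead t)].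

Definition path_t : finType := {x : pathidx_t | valid_path x}.
Definition nq : nat := #|path_t|.

Definition theta_at (th : 'rV[R]_np) (k : param_t) : R := th 0 (enum_rank k).

Definition weight (th : 'rV[R]_np) (u v : V) : R :=
  if @insub _ (fun uv : V * V => E uv.1 uv.2) edge_t (u, v) is Some e
  then theta_at th (inl e) else 0.

Definition bias (th : 'rV[R]_np) (v : V) : R :=
  if @insub _ (fun v => ~~ is_input v) noninput_t v is Some w
  then theta_at th (inr w) else 0.

Definition path_coord (th : 'rV[R]_np) (x : pathidx_t) : R :=
  let t := tagged x in
  (if is_input (thead t) then 1 else bias th (thead t)) *
  \prod_(i < tag x) weight th (nth (thead t) t i) (nth (thead t) t i.+1).

Definition Phi (th : 'rV[R]_np) : 'cV[R]_nq :=
  \col_(k < nq) path_coord th (val (enum_val k)).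

Definition jacPhi (th : 'rV[R]_np) : 'M[R]_(nq, np) :=
  \matrix_(k < nq, i < np)
     derive (fun th' : 'rV[R]_np => Phi th' k 0) th (delta_mx 0 i).

Definition Gmx (th : 'rV[R]_np) : 'M[R]_np := (jacPhi th)^T *m jacPhi th.

Definition objD (th : 'rV[R]_np) (D : 'M[R]_np) : R :=
  np%:R * ln (\sum_(i < np) D i i * Gmx th i i) - \sum_(i < np) ln (D i i).

Definition Fobj (th : 'rV[R]_np) (u : 'cV[R]_nH) : R :=
  np%:R * ln (\sum_(i < np) expR ((Bmx *m u) i 0) * Gmx th i i)
  - \sum_(i < np) (Bmx *m u) i 0.

Definition diag_exp (u : 'cV[R]_nH) : 'M[R]_np :=
  diag_mx (map_mx expR (Bmx *m u))^T.

End NN.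

(* Each generator D_{lam,h} equals diag(exp(B u)) for u = -ln(lam) e_h, and
   u |-> diag(exp(B u)) is a homomorphism from (R^H, +) into the invertible
   diagonal matrices.  Hence its image is a group containing the generators
   and contained in the group they generate: it is exactly D.  On that image
   the objective on D is F, because ln(exp((B u)_i)) = (B u)_i. *)

From HB Require Import structures.
From mathcomp Require Import all_boot all_order all_algebra.
From mathcomp Require Import all_classical all_reals all_analysis.
Import Order.TTheory GRing.Theory Num.Theory.
Local Open Scope ring_scope.

Section DiagExp.
Variables (V : finType) (E : rel V) (R : realType).
Local Notation B := (Bmx E R).
Local Notation diag_exp := (@diag_exp V E R).

Lemma diag_expE (u : 'cV[R]_(nH E)) i j :
  diag_exp u i j = expR ((B *m u) i 0) *+ (i == j).
Proof. by rewrite /diag_exp !mxE. Qed.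

Lemma diag_exp0 : diag_exp 0 = 1%:M.
Proof. by apply/matrixP => i j; rewrite diag_expE mulmx0 !mxE expR0. Qed.

Lemma diag_expD (u v : 'cV[R]_(nH E)) :
  diag_exp (u + v) = diag_exp u *m diag_exp v.
Proof.
apply/matrixP => i j; rewrite {2}/diag_exp mul_diag_mx [RHS]mxE !diag_expE.
by rewrite mulmxDr [in LHS]mxE 2![in RHS]mxE expRD mulrnAr.
Qed.

Lemma diag_expN (u : 'cV[R]_(nH E)) : diag_exp (- u) = invmx (diag_exp u).
Proof.
have diag_expK : diag_exp u *m diag_exp (- u) = 1%:M.
  by rewrite -diag_expD subrr diag_exp0.
have [u_unit _] := mulmx1_unit diag_expK.
by rewrite -[LHS]mul1mx -(mulVmx u_unit) -mulmxA diag_expK mulmx1.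
Qed.

Lemma Dlam_diag_exp (lam : R) (h : hidden_t E) : 0 < lam ->
  Dlam lam h = diag_exp (- ln lam *: delta_mx (enum_rank h) 0).
Proof.
move=> lam_gt0; apply/matrixP => i j.
rewrite diag_expE -scalemxAr -colE !mxE enum_rankK /=; congr (_ *+ _).
case: ifP => _; first by rewrite mulrN1 opprK lnK ?posrE.
case: ifP => _; first by rewrite mulr1 expRN lnK ?posrE.
by rewrite mulr0 expR0.
Qed.

Lemma Dgroup_diag_exp (u : 'cV[R]_(nH E)) : Dgroup (diag_exp u).
Proof.
rewrite (matrix_sum_delta u).
elim/big_ind: _ => [|v w Dv Dw|j _]; first by rewrite diag_exp0; exact: Dgroup1.
  by rewrite diag_expD; exact: DgroupM.
rewrite big_ord1 -[u j 0]opprK -[- u j 0]expRK -[j]enum_valK.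
rewrite -Dlam_diag_exp ?expR_gt0 //; exact/DgroupD/expR_gt0.
Qed.

Lemma DgroupP (D : 'M[R]_(np E)) :
  Dgroup D <-> exists u : 'cV[R]_(nH E), D = diag_exp u.
Proof.
split; last by case=> u ->; exact: Dgroup_diag_exp.
elim=> [|lam h lam_gt0|A C _ [u ->] _ [v ->]|A _ [u ->]].
- by exists 0; rewrite diag_exp0.
- by exists (- ln lam *: delta_mx (enum_rank h) 0); rewrite Dlam_diag_exp.
- by exists (u + v); rewrite diag_expD.
- by exists (- u); rewrite diag_expN.
Qed.

Lemma objD_diag_exp (th : 'rV[R]_(np E)) (u : 'cV[R]_(nH E)) :
  objD th (diag_exp u) = Fobj th u.
Proof.
rewrite /objD /Fobj; congr (_ * ln _ - _); apply: eq_bigr => i _;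
  by rewrite diag_expE eqxx mulr1n ?expRK.
Qed.

End DiagExp.

Theorem lemmaF3 (V : finType) (E : rel V) (R : realType)
  (hdag : acyclic_graph E) :
  (forall D : 'M[R]_(np E),
      Dgroup D <-> exists u : 'cV[R]_(nH E), D = diag_exp u) /\
  (forall (th : 'rV[R]_(np E)) (u : 'cV[R]_(nH E)),
      (forall v : 'cV[R]_(nH E), Fobj th u <= Fobj th v) ->
      Dgroup (diag_exp u) /\
      (forall D' : 'M[R]_(np E), Dgroup D' -> objD th (diag_exp u) <= objD th D')).
Proof.
(* Acyclicity is not needed: the description of D is purely algebraic. *)
split=> [|th u u_min]; first exact: DgroupP.
split=> [|D' /DgroupP [v ->]]; first exact: Dgroup_diag_exp.
by rewrite !objD_diag_exp; exact: u_min.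
Qed.
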